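(* Let $A$ be a vertex of finite height in a monotonous quiver $\mathcal O$. Then for every vertex $B$ of the clade $\mathcal O_A$ we have $\infty>h(B)\ge h(A)$ and $h_A(B)\ge h(B)-h(A)$, where $h$ and $h_A$ denote heights in $\mathcal O$ and in $\mathcal O_A$, respectively.
   Context: A quiver consists of a class of vertices and, for each ordered pair of vertices $(A,B)$, a set of edges $A\to B$ (loops and multiple edges allowed). An evolution of length $m\ge 0$ is a sequence $A_0\leftarrow A_1\leftarrow\cdots\leftarrow A_m$ of vertices together with edges $A_k\to A_{k-1}$ ($1\le k\le m$); $A_0$ is its initial and $A_m$ its terminal vertex. Write $A\le B$ ($A$ is an ancestor of $B$, $B$ a descendant of $A$) if there is an evolution with initial vertex $A$ and terminal vertex $B$; $A,B$ are isotypic if $A\le B$ and $B\le A$. A vertex $A$ is primitive if every ancestor of $A$ is isotypic to $A$. A full evolution for $X$ is an evolution with primitive initial vertex and terminal vertex $X$. The height of $X$ is the smallest length of a full evolution for $X$ ($\infty$ if none). A quiver is monotonous if $h(A)\ge h(B)$ for every edge $A\to B$. The clade $\mathcal O_A$ of a vertex $A$ is the quiver formed by all descendants of $A$ in $\mathcal O$ and all edges of $\mathcal O$ between them (primitivity and height in $\mathcal O_A$ are computed within $\mathcal O_A$). *)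

From Stdlib Require Import Arith ClassicalEpsilon.

Record Quiver := { V : Type ; E : V -> V -> Type }.

(* evol Q A B m : there is an evolution of length m with initial vertex A
   and terminal vertex B, i.e. A = A_0 <- A_1 <- ... <- A_m = B with
   edges A_k -> A_{k-1}. *)
Inductive evol (Q : Quiver) : V Q -> V Q -> nat -> Prop :=
| evol_nil : forall A, evol Q A A 0
| evol_cons : forall A B C m, evol Q A B m -> E Q C B -> evol Q A C (S m).

Definition anc (Q : Quiver) (A B : V Q) : Prop := exists m, evol Q A B m.

Definition isotypic (Q : Quiver) (A B : V Q) : Prop := anc Q A B /\ anc Q B A.

Definition primitive (Q : Quiver) (A : V Q) : Prop :=
  forall P, anc Q P A -> isotypic Q P A.

Definition full_evol_len (Q : Quiver) (X : V Q) (m : nat) : Prop :=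
  exists P, primitive Q P /\ evol Q P X m.

(* specification of the height: None encodes infinity *)
Definition height_spec (Q : Quiver) (X : V Q) (o : option nat) : Prop :=
  match o with
  | None => ~ exists m, full_evol_len Q X m
  | Some n => full_evol_len Q X n /\ forall m, full_evol_len Q X m -> n <= m
  end.

Definition height (Q : Quiver) (X : V Q) : option nat :=
  epsilon (inhabits None) (height_spec Q X).

Definition oge (x y : option nat) : Prop :=
  match x, y with
  | None, _ => True
  | Some _, None => False
  | Some a, Some b => b <= a
  end.

Definition monotonous (Q : Quiver) : Prop :=
  forall A B : V Q, E Q A B -> oge (height Q A) (height Q B).

Definition clade (Q : Quiver) (A : V Q) : Quiver :=
  {| V := { B : V Q | anc Q A B } ;
     E := fun x y => E Q (proj1_sig x) (proj1_sig y) |}.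

From Stdlib Require Import Arith Lia Wf_nat Classical ProofIrrelevance ClassicalEpsilon.

(* Prefixing a full evolution for A of length h(A) to an evolution from A to
   B gives a full evolution for B, so h(B) is finite, and h(B) >= h(A) by
   monotonicity.  A primitive vertex P of the clade is isotypic there to its
   root A, hence an ancestor of A in O, so h(P) <= h(A) by monotonicity;
   prefixing a full evolution for P in O to a full evolution for B in the
   clade starting at P yields h(B) <= h(P) + h_A(B) <= h(A) + h_A(B). *)

Lemma evol_trans (Q : Quiver) (A B C : V Q) (m k : nat) :
  evol Q A B m -> evol Q B C k -> evol Q A C (m + k).
Proof.
  intros HAB HBC. induction HBC as [|X Y Z k HXY IH HE].
  - now rewrite Nat.add_0_r.
  - rewrite Nat.add_succ_r. exact (evol_cons Q _ _ _ _ (IH HAB) HE).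
Qed.

Lemma anc_refl (Q : Quiver) (A : V Q) : anc Q A A.
Proof. exists 0. apply evol_nil. Qed.

Lemma anc_trans (Q : Quiver) (A B C : V Q) : anc Q A B -> anc Q B C -> anc Q A C.
Proof. intros [m Hm] [k Hk]. exists (m + k). exact (evol_trans Q _ _ _ _ _ Hm Hk). Qed.

Lemma full_evol_len_trans (Q : Quiver) (X Y : V Q) (m k : nat) :
  full_evol_len Q X m -> evol Q X Y k -> full_evol_len Q Y (m + k).
Proof.
  intros [P [HP HPX]] HXY. exists P. split; [exact HP|].
  exact (evol_trans Q _ _ _ _ _ HPX HXY).
Qed.

Lemma height_specP (Q : Quiver) (X : V Q) : height_spec Q X (height Q X).
Proof.
  unfold height. apply epsilon_spec.
  destruct (classic (exists m, full_evol_len Q X m)) as [Hfull | Hnone].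
  - assert (Hdec : forall m, full_evol_len Q X m \/ ~ full_evol_len Q X m)
      by (intro; apply classic).
    destruct (dec_inh_nat_subset_has_unique_least_element _ Hdec Hfull)
      as [n [[Hn Hmin] _]].
    now exists (Some n).
  - now exists None.
Qed.

Lemma full_evol_len_height (Q : Quiver) (X : V Q) (n : nat) :
  height Q X = Some n -> full_evol_len Q X n.
Proof. intros Hh. pose proof (height_specP Q X) as Hspec. rewrite Hh in Hspec. apply Hspec. Qed.

Lemma height_le_full_evol_len (Q : Quiver) (X : V Q) (n m : nat) :
  height Q X = Some n -> full_evol_len Q X m -> n <= m.
Proof. intros Hh. pose proof (height_specP Q X) as Hspec. rewrite Hh in Hspec. apply Hspec. Qed.

Lemma height_finite (Q : Quiver) (X : V Q) (m : nat) :
  full_evol_len Q X m -> exists n, height Q X = Some n.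
Proof.
  intros Hfull. pose proof (height_specP Q X) as Hspec.
  destruct (height Q X) as [n|]; [now exists n|].
  exfalso. apply Hspec. now exists m.
Qed.

Lemma oge_trans (x y z : option nat) : oge x y -> oge y z -> oge x z.
Proof. destruct x, y, z; simpl; intros; auto; lia. Qed.

Lemma oge_refl (x : option nat) : oge x x.
Proof. destruct x; simpl; auto. Qed.

Lemma monotonous_anc_height (Q : Quiver) (X Y : V Q) :
  monotonous Q -> anc Q X Y -> oge (height Q Y) (height Q X).
Proof.
  intros Hmono [m HXY]. induction HXY as [X|X Y Z m HXY IH HE].
  - apply oge_refl.
  - exact (oge_trans _ _ _ (Hmono _ _ HE) IH).
Qed.

Definition clade_root (Q : Quiver) (A : V Q) : V (clade Q A) :=
  exist _ A (anc_refl Q A).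

Lemma clade_evol_proj (Q : Quiver) (A : V Q) (x y : V (clade Q A)) (m : nat) :
  evol (clade Q A) x y m -> evol Q (proj1_sig x) (proj1_sig y) m.
Proof.
  intros Hxy. induction Hxy as [x|x y z m Hxy IH HE].
  - apply evol_nil.
  - exact (evol_cons Q _ _ _ _ IH HE).
Qed.

Lemma clade_evol_lift (Q : Quiver) (A X Y : V Q) (m : nat) :
  evol Q X Y m -> forall (HX : anc Q A X) (HY : anc Q A Y),
  evol (clade Q A) (exist _ X HX) (exist _ Y HY) m.
Proof.
  intros HXY. induction HXY as [X|X Y Z m HXY IH HE]; intros HX HZ.
  - rewrite (proof_irrelevance _ HX HZ). apply evol_nil.
  - assert (HY : anc Q A Y) by (apply (anc_trans Q _ X); [exact HX | now exists m]).
    exact (evol_cons (clade Q A) _ (exist _ Y HY) (exist _ Z HZ) _ (IH HX HY) HE).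
Qed.

Lemma clade_root_anc (Q : Quiver) (A : V Q) (x : V (clade Q A)) :
  anc (clade Q A) (clade_root Q A) x.
Proof.
  destruct x as [X [m HAX]]. exists m. apply clade_evol_lift. exact HAX.
Qed.

Lemma clade_primitive_anc_root (Q : Quiver) (A : V Q) (x : V (clade Q A)) :
  primitive (clade Q A) x -> anc Q (proj1_sig x) A.
Proof.
  intros Hprim. destruct (Hprim _ (clade_root_anc Q A x)) as [_ [m Hxr]].
  exists m. exact (clade_evol_proj Q A _ _ _ Hxr).
Qed.

Lemma full_evol_len_le_clade_height (Q : Quiver) (A B : V Q) (HB : anc Q A B)
    (hA hAB : nat) :
  monotonous Q -> height Q A = Some hA ->
  height (clade Q A) (exist _ B HB) = Some hAB ->
  exists m, m <= hA + hAB /\ full_evol_len Q B m.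
Proof.
  intros Hmono HhA HhAB.
  destruct (full_evol_len_height _ _ _ HhAB) as [p [Hprim Hpb]].
  pose proof (clade_primitive_anc_root Q A p Hprim) as HPA.
  apply clade_evol_proj in Hpb. destruct p as [P [j HAP]]. simpl in HPA, Hpb.
  destruct (height_finite Q P (hA + j)) as [hP HhP].
  { exact (full_evol_len_trans Q A P hA j (full_evol_len_height _ _ _ HhA) HAP). }
  pose proof (monotonous_anc_height Q P A Hmono HPA) as HPle.
  rewrite HhA, HhP in HPle. simpl in HPle.
  exists (hP + hAB). split; [lia|].
  exact (full_evol_len_trans Q P B hP hAB (full_evol_len_height _ _ _ HhP) Hpb).
Qed.

Theorem theorem9p3 (Q : Quiver) (A : V Q) (hA : nat) :
  monotonous Q ->
  height Q A = Some hA ->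
  forall (B : V Q) (HB : anc Q A B),
    exists hB : nat,
      height Q B = Some hB /\ hA <= hB /\
      match height (clade Q A) (exist _ B HB) with
      | None => True
      | Some hAB => hB - hA <= hAB
      end.
Proof.
  intros Hmono HhA B HB.
  destruct HB as [k HAB] eqn:EHB.
  destruct (height_finite Q B (hA + k)) as [hB HhB].
  { exact (full_evol_len_trans Q A B hA k (full_evol_len_height _ _ _ HhA) HAB). }
  exists hB. split; [exact HhB|]. split.
  - pose proof (monotonous_anc_height Q A B Hmono (ex_intro _ k HAB)) as Hle.
    now rewrite HhA, HhB in Hle.
  - rewrite <- EHB.
    destruct (height (clade Q A) (exist _ B HB)) as [hAB|] eqn:HhAB; [|exact I].
    destruct (full_evol_len_le_clade_height Q A B HB hA hAB Hmono HhA HhAB)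
      as [m [Hm Hfull]].
    pose proof (height_le_full_evol_len Q B hB m HhB Hfull). lia.
Qed.
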